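(* Let $\mathcal{S}\subset\mathbb{R}^d$ be compact, let $k$ be a continuous symmetric positive definite kernel on $\mathcal{S}$ with Mercer expansion $k(\boldsymbol{t},\boldsymbol{t}')=\sum_{i\ge1}\eta_i\phi_i(\boldsymbol{t})\phi_i(\boldsymbol{t}')$ ($\eta_i>0$, $\phi_i$ orthonormal in $L_2(\mathcal{S})$), let $\gamma>0$, and let $\tilde{k}(\boldsymbol{t},\boldsymbol{t}')=\sum_{i\ge1}\frac{\eta_i}{\eta_i+\gamma}\phi_i(\boldsymbol{t})\phi_i(\boldsymbol{t}')$ with RKHS $\mathcal{H}_{\tilde{k}}$. Given observed events $\boldsymbol{t}_1,\dots,\boldsymbol{t}_n\in\mathcal{S}$, consider $$J(h)= -\sum_{i=1}^{n}\log h^2(\boldsymbol{t}_i) + \Vert h\Vert^2_{\mathcal{H}_{\tilde{k}}},\qquad h\in\mathcal{H}_{\tilde{k}}.$$ If $\hat h$ is a minimizer of $J$ over $\mathcal{H}_{\tilde{k}}$, then there exist coefficients $\alpha\in\mathbb{R}^n$ such that $\hat{h}(\cdot)=\sum_{i=1}^{n}\alpha_i\tilde{k}(\boldsymbol{t}_i,\cdot)$, and the posterior mean of the latent Gaussian process is $\hat{\boldsymbol{g}}=\kappa^{-1}(\hat{h}^2(\boldsymbol{t}))$.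
   Context: Gaussian Cox process model: a latent function $g:\mathcal{S}\to\mathbb{R}$ with a Gaussian process prior, and a deterministic non-negative smooth invertible link function $\kappa:\mathbb{R}\to\mathbb{R}^+$; the observed points are a Poisson process with intensity $\lambda(\boldsymbol{t})=\kappa(g(\boldsymbol{t}))$, so the log-likelihood given $g$ is $\sum_{i=1}^n\log\kappa(g(\boldsymbol{t}_i))-\int_{\mathcal{S}}\kappa(g(\boldsymbol{t}))d\boldsymbol{t}$. The posterior mean estimate $\hat{\boldsymbol g}$ is the (Laplace/MAP) mode obtained by writing $h=\kappa^{1/2}(g)$ and minimizing the penalized negative log-likelihood $-\sum_i\log h^2(\boldsymbol{t}_i)+\int_{\mathcal{S}}h^2+\gamma\Vert h\Vert^2_{\mathcal{H}_k}$, which for $h\in\mathcal{H}_k$ equals $J(h)$ above; $\mathcal{H}_k$ and $\mathcal{H}_{\tilde k}$ contain the same functions. *)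

From HB Require Import structures.
From mathcomp Require Import all_boot all_order all_algebra.
From mathcomp Require Import all_classical all_reals all_analysis.

Set Implicit Arguments.
Unset Strict Implicit.
Unset Printing Implicit Defensive.
Import Order.TTheory GRing.Theory Num.Theory.
Import numFieldNormedType.Exports.
Local Open Scope classical_set_scope.
Local Open Scope ring_scope.

Definition row_of_seq {R : realType} (d : nat) (xs : seq R) : 'rV[R]_d :=
  \row_(i < d) nth 0 xs i.

(* The same coordinates, as a d-tuple (n.-tuple R carries the product
   sigma-algebra generated by the coordinate projections). *)
Definition row_of_tuple {R : realType} (d : nat) (x : d.-tuple R) : 'rV[R]_d :=
  \row_(i < d) tnth x i.

Fixpoint iter_lebesgue {R : realType} (n : nat) (g : seq R -> \bar R) : \bar R :=
  match n with
  | 0 => g [::]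
  | n'.+1 => (\int[@lebesgue_measure R]_x iter_lebesgue n' (fun xs => g (x :: xs)))%E
  end.

Definition int_over {R : realType} (d : nat) (S : set 'rV[R]_d)
    (f : 'rV[R]_d -> R) : \bar R :=
  iter_lebesgue d (fun xs => ((\1_S (row_of_seq d xs) : R) * f (row_of_seq d xs))%:E).

Definition orthonormal_L2 {R : realType} (d : nat) (S : set 'rV[R]_d)
    (phi : nat -> 'rV[R]_d -> R) : Prop :=
  (forall i, measurable_fun setT (fun x : d.-tuple R => phi i (row_of_tuple x))) /\
  (forall i j, int_over S (fun t => phi i t * phi j t) = (if i == j then 1 else 0)%:E).

Definition kernel_continuous_on {R : realType} (d : nat) (S : set 'rV[R]_d)
    (k : 'rV[R]_d -> 'rV[R]_d -> R) : Prop :=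
  {within S `*` S, continuous (fun p : 'rV[R]_d * 'rV[R]_d => k p.1 p.2)}.

Definition kernel_symmetric {R : realType} (d : nat) (S : set 'rV[R]_d)
    (k : 'rV[R]_d -> 'rV[R]_d -> R) : Prop :=
  forall t t', S t -> S t' -> k t t' = k t' t.

Definition kernel_posdef {R : realType} (d : nat) (S : set 'rV[R]_d)
    (k : 'rV[R]_d -> 'rV[R]_d -> R) : Prop :=
  forall (m : nat) (x : 'I_m -> 'rV[R]_d) (c : 'I_m -> R),
    (forall i, S (x i)) ->
    0 <= \sum_(i < m) \sum_(j < m) c i * c j * k (x i) (x j).

(* Mercer expansion k(t,t') = sum_i eta_i phi_i(t) phi_i(t') on S x S
   (indices shifted to start at 0). *)
Definition mercer_expansion {R : realType} (d : nat) (S : set 'rV[R]_d)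
    (k : 'rV[R]_d -> 'rV[R]_d -> R) (eta : nat -> R) (phi : nat -> 'rV[R]_d -> R) : Prop :=
  forall t t', S t -> S t' ->
    (fun N => \sum_(i < N) eta i * phi i t * phi i t') @ \oo --> k t t'.

Definition ktilde {R : realType} (d : nat) (eta : nat -> R)
    (phi : nat -> 'rV[R]_d -> R) (gamma : R) (t t' : 'rV[R]_d) : R :=
  limn (fun N => \sum_(i < N) eta i / (eta i + gamma) * phi i t * phi i t').

(* Functions are represented on the
   whole of R^d; two of them are identified when they agree on S, which is
   enforced by: ip f f = 0 <-> f vanishes on S. *)
Definition is_RKHS {R : realType} (d : nat) (S : set 'rV[R]_d)
    (K : 'rV[R]_d -> 'rV[R]_d -> R)
    (H : set ('rV[R]_d -> R)) (ip : ('rV[R]_d -> R) -> ('rV[R]_d -> R) -> R) : Prop :=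
  [/\
      H (fun _ => 0) /\
      (forall (a : R) f g, H f -> H g -> H (fun s => a * f s + g s)),
      (forall f g, H f -> H g -> ip f g = ip g f) /\
      (forall (a : R) f g h, H f -> H g -> H h ->
          ip (fun s => a * f s + g s) h = a * ip f h + ip g h),
      (forall f, H f -> 0 <= ip f f) /\
      (forall f, H f -> (ip f f = 0 <-> forall s, S s -> f s = 0)),
      (forall u : nat -> ('rV[R]_d -> R), (forall n, H (u n)) ->
         (forall e : R, 0 < e -> exists N, forall m n, (N <= m)%N -> (N <= n)%N ->
             ip (fun s => u m s - u n s) (fun s => u m s - u n s) < e) ->
         exists2 f, H f &
           (fun n => ip (fun s => u n s - f s) (fun s => u n s - f s)) @ \oo --> (0 : R))
    &
      (forall t, S t -> H (K t)) /\
      (forall f t, H f -> S t -> ip f (K t) = f t)].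

(* J(h) = - sum_i log h^2(t_i) + ||h||^2_H, with value +oo when some
   h(t_i) = 0 (log 0 = -oo). *)
Definition Jobj {R : realType} (d : nat) (ip : ('rV[R]_d -> R) -> ('rV[R]_d -> R) -> R)
    (n : nat) (tt : 'I_n -> 'rV[R]_d) (h : 'rV[R]_d -> R) : \bar R :=
  if [forall i, h (tt i) != 0]
  then (- (\sum_(i < n) ln (h (tt i) ^+ 2)) + ip h h)%:E
  else +oo%E.

From HB Require Import structures.
From mathcomp Require Import all_boot all_order all_algebra.
From mathcomp Require Import all_classical all_reals all_analysis.
From mathcomp Require Import ring lra.
Import Order.TTheory GRing.Theory Num.Theory.
Import numFieldNormedType.Exports.
Local Open Scope classical_set_scope.
Local Open Scope ring_scope.

(* Project [hhat] onto the span of the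
   functions [ktilde (tt i)]: the residual is orthogonal to each of them, so by
   the reproducing property it vanishes at every data point.  The projection
   therefore has the same data term in J as [hhat], and by Pythagoras a norm no
   larger; minimality of [hhat] forces the residual to have norm 0, i.e. to
   vanish on S. *)

Section PreInnerProduct.
Set Implicit Arguments.
Unset Strict Implicit.

Variables (R : realFieldType) (T : Type) (H : set (T -> R))
  (ip : (T -> R) -> (T -> R) -> R).

Record pre_inner_product : Prop := PreInnerProduct {
  pip_mem0 : H (fun _ => 0);
  pip_memZD : forall (a : R) f g, H f -> H g -> H (fun s => a * f s + g s);
  pip_ipC : forall f g, H f -> H g -> ip f g = ip g f;
  pip_ipZDl : forall (a : R) f g h, H f -> H g -> H h ->
    ip (fun s => a * f s + g s) h = a * ip f h + ip g h;
  pip_ge0 : forall f, H f -> 0 <= ip f f }.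

Hypothesis PH : pre_inner_product.

Let mem0 := pip_mem0 PH.
Let memZD := pip_memZD PH.
Let ipC := pip_ipC PH.
Let ipZDl := pip_ipZDl PH.
Let ip_ge0 := pip_ge0 PH.

Lemma ip0l h : H h -> ip (fun _ => 0) h = 0.
Proof.
move=> Hh; have := ipZDl 1 mem0 mem0 Hh.
have -> : (fun _ : T => 1 * (0 : R) + 0) = (fun _ => 0).
  by apply: funext => s; rewrite mulr0 addr0.
by move=> E; lra.
Qed.

Lemma memBZ (mu : R) f g : H f -> H g -> H (fun s => f s - mu * g s).
Proof.
move=> Hf Hg; have -> : (fun s => f s - mu * g s) = (fun s => - mu * g s + f s).
  by apply: funext => s; rewrite mulNr addrC.
exact: memZD.
Qed.

Lemma memD f g : H f -> H g -> H (fun s => f s + g s).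
Proof.
move=> Hf Hg; have := memZD 1 Hf Hg.
by under eq_fun => s do rewrite mul1r.
Qed.

Lemma memB f g : H f -> H g -> H (fun s => f s - g s).
Proof.
move=> Hf Hg; have := memBZ 1 Hf Hg.
by under eq_fun => s do rewrite mul1r.
Qed.

Lemma ipDl f g h : H f -> H g -> H h ->
  ip (fun s => f s + g s) h = ip f h + ip g h.
Proof.
move=> Hf Hg Hh; rewrite -[ip f h]mul1r -ipZDl //.
by congr ip; apply: funext => s; rewrite mul1r.
Qed.

Lemma ipBZl (mu : R) f g h : H f -> H g -> H h ->
  ip (fun s => f s - mu * g s) h = ip f h - mu * ip g h.
Proof.
move=> Hf Hg Hh.
have -> : (fun s => f s - mu * g s) = (fun s => - mu * g s + f s).
  by apply: funext => s; rewrite mulNr addrC.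
by rewrite ipZDl // mulNr addrC.
Qed.

Definition lincomb m (c : nat -> R) (u : nat -> T -> R) : T -> R :=
  fun s => \sum_(i < m) c i * u i s.

Lemma lincomb0 c u : lincomb 0 c u = (fun _ => 0).
Proof. by apply: funext => s; rewrite /lincomb big_ord0. Qed.

Lemma lincombS m c u :
  lincomb m.+1 c u = (fun s => c m * u m s + lincomb m c u s).
Proof. by apply: funext => s; rewrite /lincomb big_ord_recr /= addrC. Qed.

Lemma mem_lincomb m c u : (forall i, H (u i)) -> H (lincomb m c u).
Proof.
move=> Hu; elim: m => [|m IH]; first by rewrite lincomb0.
by rewrite lincombS; apply: memZD.
Qed.

Lemma ip_lincombl m c u h : (forall i, H (u i)) -> H h ->
  ip (lincomb m c u) h = \sum_(i < m) c i * ip (u i) h.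
Proof.
move=> Hu Hh; elim: m => [|m IH]; first by rewrite lincomb0 ip0l ?big_ord0.
rewrite lincombS ipZDl ?IH ?big_ord_recr /= 1?addrC //.
exact: mem_lincomb.
Qed.

(* The degenerate case of Cauchy-Schwarz: positivity of the quadratic
   [l |-> ip (l r + g) (l r + g) = 2 l ip g r + ip g g] forces [ip g r = 0]. *)
Lemma ip_self_eq0_orthogonal g r : H g -> H r -> ip r r = 0 -> ip g r = 0.
Proof.
move=> Hg Hr Hrr; apply/eqP; apply: contraT => /negbTE x0.
set x := ip g r; set A := ip g g.
set l := - (A + 1) / (2 * x).
have lx : l * x = - (A + 1) / 2.
  by rewrite /l; field; do ?split; rewrite ?x0 ?pnatr_eq0.
have HF : H (fun s => l * r s + g s) by apply: memZD.
have := ip_ge0 HF.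
rewrite ipZDl // ipC // [ip g _]ipC // !ipZDl // Hrr -/x -/A ipC // -/x.
by lra.
Qed.

Lemma exists_orthogonal_scaling f r : H f -> H r ->
  exists mu : R, ip (fun s => f s - mu * r s) r = 0.
Proof.
move=> Hf Hr; have [rr0|rr0] := eqVneq (ip r r) 0.
  by exists 0; rewrite ipBZl // rr0 ip_self_eq0_orthogonal // mulr0 subr0.
by exists (ip f r / ip r r); rewrite ipBZl // divfK // subrr.
Qed.

(* Gram-Schmidt without normalisation; the scaling step above makes it work
   even when [ip] is only semi-definite and the [u i] are dependent. *)
Lemma exists_orthogonal_residual m u : (forall i, H (u i)) ->
  forall f, H f -> exists c : nat -> R,
    forall j, (j < m)%N -> ip (fun s => f s - lincomb m c u s) (u j) = 0.
Proof.
move=> Hu; elim: m => [|m IH] f Hf; first by exists (fun _ => 0).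
have [c Hc] := IH f Hf; have [d Hd] := IH (u m) (Hu m).
set f' := fun s => f s - lincomb m c u s.
set r := fun s => u m s - lincomb m d u s.
have Hf' : H f' by apply: memB => //; exact: mem_lincomb.
have Hr : H r by apply: memB => //; exact: mem_lincomb.
have [mu Hmu] := exists_orthogonal_scaling Hf' Hr.
exists (fun i => if (i < m)%N then c i - mu * d i else mu).
have -> : (fun s => f s - lincomb m.+1
             (fun i => if (i < m)%N then c i - mu * d i else mu) u s)
          = (fun s => f' s - mu * r s).
  apply: funext => s; rewrite lincombS ltnn /f' /r /lincomb.
  under eq_bigr => i _ do rewrite ltn_ord mulrBl -mulrA.
  by rewrite sumrB -mulr_sumr; ring.
have Hres : H (fun s => f' s - mu * r s) by exact: memBZ.
have res_u j : (j < m)%N -> ip (fun s => f' s - mu * r s) (u j) = 0.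
  by move=> jm; rewrite ipBZl // Hc // Hd // mulr0 subr0.
move=> j; rewrite ltnS leq_eqVlt => /orP [/eqP ->|]; last exact: res_u.
have -> : u m = (fun s => r s + lincomb m d u s).
  by apply: funext => s; rewrite /r subrK.
rewrite ipC //; last by apply: memD => //; exact: mem_lincomb.
rewrite ipDl ?ip_lincombl //; last exact: mem_lincomb.
rewrite ipC // Hmu add0r big1 // => i _.
by rewrite ipC // res_u ?mulr0.
Qed.

Lemma ip_add_orthogonal v w : H v -> H w -> ip v w = 0 ->
  ip (fun s => v s + w s) (fun s => v s + w s) = ip v v + ip w w.
Proof.
move=> Hv Hw vw0.
have Hvw : H (fun s => v s + w s) by exact: memD.
rewrite ipDl // ipC // [ip w _]ipC // !ipDl // [ip w v]ipC // vw0.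
by rewrite add0r addr0.
Qed.

Definition kernel_expansion (K : T -> T -> R) n (tt : 'I_n -> T) (c : 'I_n -> R)
  : T -> R := fun s => \sum_(i < n) c i * K (tt i) s.

Lemma exists_kernel_interpolant (K : T -> T -> R) n (tt : 'I_n -> T) f :
    (forall i, H (K (tt i))) ->
    (forall g i, H g -> ip g (K (tt i)) = g (tt i)) -> H f ->
  exists c : 'I_n -> R, let v := kernel_expansion K tt c in
    [/\ H v, forall i, v (tt i) = f (tt i)
      & ip f f = ip v v + ip (fun s => f s - v s) (fun s => f s - v s)].
Proof.
move=> memK ipK Hf.
pose u j := if insub j is Some i then K (tt i) else fun _ => 0.
have uE (i : 'I_n) : u i = K (tt i) by rewrite /u valK.
have Hu j : H (u j) by rewrite /u; case: insub.
have [c Hc] := exists_orthogonal_residual n Hu Hf.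
exists (fun i => c i).
have -> : kernel_expansion K tt (fun i => c i) = lincomb n c u.
  apply: funext => s; rewrite /kernel_expansion /lincomb.
  by under eq_bigr => i _ do rewrite -uE.
rewrite /=; set v := lincomb n c u.
have Hv : H v by exact: mem_lincomb.
set w := fun s => f s - v s.
have Hw : H w by exact: memB.
have w_tt (i : 'I_n) : w (tt i) = 0 by rewrite -ipK // -uE Hc.
split=> // [i|].
  by apply/esym/eqP; rewrite -subr_eq0; apply/eqP; exact: w_tt.
have vw0 : ip v w = 0.
  by rewrite ip_lincombl // big1 // => i _; rewrite ipC // uE ipK // w_tt mulr0.
rewrite -ip_add_orthogonal //.
by congr ip; apply: funext => s; rewrite /w addrC subrK.
Qed.

End PreInnerProduct.

Lemma Jobj_le_agreeE (R : realType) d (ip : ('rV[R]_d -> R) -> ('rV[R]_d -> R) -> R)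
    n (tt : 'I_n -> 'rV[R]_d) (h h' : 'rV[R]_d -> R) :
  (forall i, h (tt i) != 0) -> (forall i, h' (tt i) = h (tt i)) ->
  (Jobj ip tt h <= Jobj ip tt h')%E = (ip h h <= ip h' h').
Proof.
move=> hne hh'; rewrite /Jobj.
have /forallP -> : forall i, h (tt i) != 0 by [].
have /forallP -> : forall i, h' (tt i) != 0 by move=> i; rewrite hh'.
have -> : \sum_(i < n) ln (h' (tt i) ^+ 2) = \sum_(i < n) ln (h (tt i) ^+ 2).
  by apply: eq_bigr => i _; rewrite hh'.
by rewrite lee_fin lerD2l.
Qed.

Theorem theorem1 (R : realType) (d : nat) (S : set 'rV[R]_d)
  (k : 'rV[R]_d -> 'rV[R]_d -> R) (eta : nat -> R) (phi : nat -> 'rV[R]_d -> R)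
  (gamma : R)
  (H : set ('rV[R]_d -> R)) (ip : ('rV[R]_d -> R) -> ('rV[R]_d -> R) -> R)
  (n : nat) (tt : 'I_n -> 'rV[R]_d) (hhat : 'rV[R]_d -> R) :
  compact S ->
  kernel_continuous_on S k -> kernel_symmetric S k -> kernel_posdef S k ->
  (forall i, 0 < eta i) -> orthonormal_L2 S phi -> mercer_expansion S k eta phi ->
  0 < gamma ->
  is_RKHS S (ktilde eta phi gamma) H ip ->
  (forall i, S (tt i)) ->
  H hhat -> (forall i, hhat (tt i) != 0) ->
  (forall h, H h -> (Jobj ip tt hhat <= Jobj ip tt h)%E) ->
  exists alpha : 'I_n -> R,
    forall s, S s -> hhat s = \sum_(i < n) alpha i * ktilde eta phi gamma (tt i) s.
Proof.
move=> _ _ _ _ _ _ _ _ [[mem0 memZD] [ipC ipZDl] [ip_ge0 ip_eq0] _ [memK ipK]]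
  Stt Hhat hne hmin.
have PH : pre_inner_product H ip by split.
have [alpha [Hv v_tt hhat_norm]] := exists_kernel_interpolant PH
  (fun i => memK _ (Stt i)) (fun g i Hg => ipK g _ Hg (Stt i)) Hhat.
set v := kernel_expansion _ _ alpha in Hv v_tt hhat_norm.
set w := fun s => hhat s - v s in hhat_norm.
have Hw : H w by exact: (memB PH).
have := hmin _ Hv; rewrite Jobj_le_agreeE // hhat_norm => le_norm.
have /(ip_eq0 _ Hw).1 w_S : ip w w = 0 by have := ip_ge0 _ Hw; lra.
by exists alpha => s Ss; apply/eqP; rewrite -subr_eq0; apply/eqP; exact: w_S.
Qed.
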